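(* Let $B\subseteq A$ be commutative unital $\mathbb{R}$-algebras, let $Q'\subseteq A$ be an archimedean quadratic module of $A$, and set $Q:=Q'\cap B$. Then the restriction map $p\colon K_{Q',Y_A}\to K_{Q,Y_B}$, $y\mapsto y|_B$, is surjective. Consequently, if moreover $B\subseteq A\subseteq\mathbb{R}^X$ for a set $X$ and $K_{Q',X}=X$, then $m(X)=K_{Q',Y_A}$ implies $m(X)=K_{Q,Y_B}$, and $\overline{m(X)}=K_{Q',Y_A}$ implies $\overline{m(X)}=K_{Q,Y_B}$.
   Context: A quadratic module of a commutative unital $\mathbb{R}$-algebra $C$ is a subset $Q\subseteq C$ with $Q+Q\subseteq Q$, $c^2Q\subseteq Q$ for all $c\in C$, and $1\in Q$; it is archimedean if for every $c\in C$ there is an integer $n\ge1$ with $n+c\in Q$. $Y_C$ is the set of unital $\mathbb{R}$-algebra homomorphisms $C\to\mathbb{R}$, with the weakest topology making all maps $y\mapsto y(c)$ continuous; $K_{Q,Y_C}:=\{y\in Y_C\mid y(g)\ge0\ \forall g\in Q\}$. For $C\subseteq\mathbb{R}^X$: $K_{Q,X}:=\{x\in X\mid g(x)\ge0\ \forall g\in Q\}$ and $m\colon X\to Y_C$, $m(x)(c)=c(x)$; overlines denote closure in $Y_C$. *)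

From HB Require Import structures.
From mathcomp Require Import all_boot all_order all_algebra.
From mathcomp Require Import boolp classical_sets reals.
Set Implicit Arguments. Unset Strict Implicit. Unset Printing Implicit Defensive.
Import Order.TTheory GRing.Theory Num.Theory.
Local Open Scope ring_scope.
Local Open Scope classical_set_scope.

Definition quadratic_module (R : realType) (C : comAlgType R) (Q : set C) :=
  [/\ (forall a b, Q a -> Q b -> Q (a + b)),
      (forall c g, Q g -> Q (c ^+ 2 * g)) & Q 1].

Definition archimedean_qm (R : realType) (C : comAlgType R) (Q : set C) :=
  forall c : C, exists n : nat, (1 <= n)%N /\ Q (n%:R + c).

(* Unital R-algebra homomorphisms C -> R, i.e. the elements of Y_C
   (represented as functions C -> R). *)
Definition is_char (R : realType) (C : comAlgType R) (y : C -> R) :=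
  [/\ y 1 = 1,
      (forall a b, y (a + b) = y a + y b),
      (forall a b, y (a * b) = y a * y b) &
      (forall (r : R) a, y (r *: a) = r * y a)].

Definition Ychar (R : realType) (C : comAlgType R) : set (C -> R) :=
  [set y | is_char y].

Definition KQY (R : realType) (C : comAlgType R) (Q : set C) : set (C -> R) :=
  [set y | is_char y /\ forall g, Q g -> 0 <= y g].

(* Closure in Y_C for the weakest topology making all evaluation maps
   y |-> y(c) continuous: y is in the closure of S iff y is in Y_C and every
   basic open neighbourhood {z | |z c_i - y c_i| < eps, i = 1..k} of y meets S. *)
Definition Yclosure (R : realType) (C : comAlgType R) (S : set (C -> R)) :
  set (C -> R) :=
  [set y | is_char y /\
     forall (cs : seq C) (eps : R), 0 < eps ->
       exists2 z, S z & forall c, c \in cs -> `|z c - y c| < eps].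

(* Given a character z of B that is nonnegative on Q = Q' ∩ B, enlarge Q' to
   N = {a | for every d > 0 there is c in ker z with a + d + c ∈ Q'}.
   N is again an archimedean quadratic module, it does not contain -1 because
   z is nonnegative on Q, and it contains ±c for every c in ker z; hence every
   character of A nonnegative on N vanishes on ker z and restricts to z.
   Such a character exists by the archimedean Positivstellensatz: by Zorn, N
   lies in a maximal quadratic module M not containing -1, and then
   a ↦ sup {r | a - r ∈ M} is a character nonnegative on M. *)

From HB Require Import structures.
From mathcomp Require Import all_boot all_order all_algebra.
From mathcomp Require Import boolp classical_sets reals.
From mathcomp Require Import ring lra.
Import Order.TTheory GRing.Theory Num.Theory.
Local Open Scope ring_scope.
Local Open Scope classical_set_scope.
Set Implicit Arguments.
Unset Strict Implicit.
Unset Printing Implicit Defensive.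

Section AlgebraScalars.
Variables (R : realType) (A : comAlgType R).

Lemma algD (k l : R) : (k + l)%:A = k%:A + l%:A :> A.
Proof. exact: scalerDl. Qed.

Lemma algN (k : R) : (- k)%:A = - k%:A :> A.
Proof. exact: scaleNr. Qed.

Lemma algM (k l : R) : (k * l)%:A = k%:A * l%:A :> A.
Proof. by rewrite mulr_algl scalerA. Qed.

Lemma alg_nat (n : nat) : (n%:R : R)%:A = n%:R :> A.
Proof. exact: scaler_nat. Qed.

End AlgebraScalars.

Definition algE := (algD, algN, algM, alg_nat, scale1r, scale0r).

Definition proper_qm (R : realType) (C : comAlgType R) (M : set C) :=
  quadratic_module M /\ ~ M (-1).

Definition maximal_proper_qm (R : realType) (C : comAlgType R) (M : set C) :=
  proper_qm M /\ forall M', proper_qm M' -> M `<=` M' -> M' `<=` M.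

Definition qm_support (R : realType) (C : comAlgType R) (M : set C) :=
  [set a | M a /\ M (- a)].

Definition sums_of_squares (R : realType) (C : comAlgType R) : set C :=
  [set s | forall P : set C, quadratic_module P -> P s].

Section QuadraticModule.
Variables (R : realType) (A : comAlgType R) (M : set A).
Hypothesis hM : quadratic_module M.

Lemma qmD a b : M a -> M b -> M (a + b).
Proof. by case: hM => addM _ _; apply: addM. Qed.

Lemma qm_sqrM c g : M g -> M (c ^+ 2 * g).
Proof. by case: hM => _ sqrM _; apply: sqrM. Qed.

Lemma qm1 : M 1.
Proof. by case: hM. Qed.

Lemma qm_sqr c : M (c ^+ 2).
Proof. by rewrite -[c ^+ 2]mulr1; exact/qm_sqrM/qm1. Qed.

Lemma qm0 : M 0.
Proof. by have := qm_sqr 0; rewrite expr0n. Qed.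

Lemma qm_algM r g : 0 <= r -> M g -> M (r%:A * g).
Proof.
move=> r_ge0 Mg; rewrite -(sqr_sqrtr r_ge0) expr2 algM -expr2.
exact: qm_sqrM.
Qed.

Lemma qm_alg r : 0 <= r -> M r%:A.
Proof. by move=> r_ge0; rewrite -[r%:A]mulr1; exact/qm_algM/qm1. Qed.

Lemma qm_alg_ge0 r : ~ M (-1) -> M r%:A -> 0 <= r.
Proof.
move=> M1 Mr; rewrite leNgt; apply/negP => r_lt0; apply: M1.
have -> : -1 = (- r)^-1%:A * r%:A :> A.
  by rewrite -algM invrN mulNr mulVf ?lt_eqF // algN scale1r.
by apply: qm_algM => //; rewrite invr_ge0 oppr_ge0 ltW.
Qed.

Lemma qm_sosM s m : sums_of_squares s -> M m -> M (s * m).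
Proof.
move=> sos_s; move: m; apply: (sos_s [set s | forall m, M m -> M (s * m)]).
split=> [a b Ma Mb m Mm | c g Mg m Mm | m Mm].
- by rewrite mulrDl; apply: qmD; [apply: Ma | apply: Mb].
- by rewrite -mulrA; apply/qm_sqrM/Mg.
- by rewrite mul1r.
Qed.

(* a h = ((a + 1) / 2)^2 h + ((a - 1) / 2)^2 (- h) *)
Lemma qm_mul_support a h : M h -> M (- h) -> M (a * h).
Proof.
move=> Mh Mnh; set H : A := (2^-1 : R)%:A.
have HH : H * H * 4%:R = 1.
  have e : (2^-1 * 2^-1 * 4%:R : R) = 1 by field.
  by rewrite /H -alg_nat -!algM e scale1r.
have -> : a * h = (H * (a + 1)) ^+ 2 * h + (H * (a - 1)) ^+ 2 * (- h).
  transitivity ((H * H * 4%:R) * (a * h)); first by rewrite HH mul1r.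
  by clearbody H; ring.
by apply: qmD; apply: qm_sqrM.
Qed.

Lemma qm_supportD a b :
  qm_support M a -> qm_support M b -> qm_support M (a + b).
Proof. by move=> [Ma Mna] [Mb Mnb]; split; rewrite ?opprD; apply: qmD. Qed.

Lemma qm_support_mull a h : qm_support M h -> qm_support M (a * h).
Proof.
move=> [Mh Mnh]; split; first exact: qm_mul_support.
by rewrite -mulrN; apply: qm_mul_support; rewrite ?opprK.
Qed.

Lemma qm_support_alg r : ~ M (-1) -> qm_support M r%:A -> r = 0.
Proof.
move=> M1 [Mr Mnr]; rewrite -algN in Mnr.
by have := qm_alg_ge0 M1 Mr; have := qm_alg_ge0 M1 Mnr; lra.
Qed.

End QuadraticModule.

Lemma sums_of_squares_qm (R : realType) (A : comAlgType R) :
  quadratic_module (@sums_of_squares R A).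
Proof.
split=> [a b sa sb P hP | c g sg P hP | P hP].
- by apply: qmD => //; [apply: sa | apply: sb].
- by apply: qm_sqrM => //; apply: sg.
- exact: qm1.
Qed.

Lemma archimedean_qm_sub (R : realType) (A : comAlgType R) (M N : set A) :
  M `<=` N -> archimedean_qm M -> archimedean_qm N.
Proof.
move=> MN archM c; have [n [n1 Mn]] := archM c.
by exists n; split => //; apply: MN.
Qed.

Lemma bigcup_chain2 (T : Type) (F : set (set T)) x1 x2 :
  total_on F subset ->
  (\bigcup_(X in F) X) x1 -> (\bigcup_(X in F) X) x2 ->
  exists2 Y, F Y & Y x1 /\ Y x2.
Proof.
move=> Ftot [Y1 FY1 Y1x] [Y2 FY2 Y2x].
by case: (Ftot _ _ FY1 FY2) => sub; [exists Y2 | exists Y1] => //;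
  split => //; apply: sub.
Qed.

Lemma maximal_proper_qm_ext (R : realType) (A : comAlgType R) (N : set A) :
  proper_qm N -> exists2 M, N `<=` M & maximal_proper_qm M.
Proof.
move=> [hN N1].
pose ext (M : set A) := proper_qm M /\ N `<=` M.
(* The empty set is admitted as the union of the empty chain. *)
have [|M [[M0|extM] Mmax]] := @Zorn_bigcup A (fun M => M = set0 \/ ext M).
- move=> F FP Ftot.
  have extF Y x : F Y -> Y x -> ext Y.
    by move=> FY Yx; case: (FP Y FY) => // Y0; rewrite Y0 in Yx.
  have [[X0 FX0 X01]|no1] := pselect (exists2 X, F X & X 1); last first.
    left; apply/seteqP; split => // x [Y FY Yx]; apply: no1; exists Y => //.
    by have [[hY _] _] := extF _ _ FY Yx; exact: qm1.
  right; have [[hX0 _] NX0] := extF _ _ FX0 X01.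
  split; last by move=> x Nx; exists X0 => //; apply: NX0.
  split; last by move=> [Y FY Y1]; have [[_ []]] := extF _ _ FY Y1.
  split; last by exists X0.
  + move=> a b ha hb; have [Y FY [Ya Yb]] := bigcup_chain2 Ftot ha hb.
    by have [[hY _] _] := extF _ _ FY Ya; exists Y => //; apply: qmD.
  + move=> c g [Y FY Yg]; have [[hY _] _] := extF _ _ FY Yg.
    by exists Y => //; apply: qm_sqrM.
- exfalso; apply: (Mmax N); last by right; split.
  by rewrite M0 /proper; split => // sub; apply: (sub 1 (qm1 hN)).
- have [[hM M1] NM] := extM.
  exists M => //; split=> // M' [hM' M'1] MM' x M'x; apply: contrapT => Mx.
  apply: (Mmax M'); first by rewrite /proper; split => // sub; apply/Mx/sub.
  by right; split => //; apply: subset_trans MM'.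
Qed.

Section MaximalProperQM.
Variables (R : realType) (A : comAlgType R) (M : set A).
Hypotheses (maxM : maximal_proper_qm M) (archM : archimedean_qm M).

Let hM : quadratic_module M. Proof. by case: maxM => [[]]. Qed.
Let M1 : ~ M (-1). Proof. by case: maxM => [[]]. Qed.

(* M + a * sums_of_squares contains M and a, so by maximality it contains -1. *)
Lemma maximal_qm_certificate a :
  ~ M a -> exists m s, [/\ M m, sums_of_squares s & -1 = m + a * s].
Proof.
move=> Ma.
pose M' := [set x | exists m s, [/\ M m, sums_of_squares s & x = m + a * s]].
have sosQ := @sums_of_squares_qm R A.
have hM' : quadratic_module M'.
  split.
  - move=> _ _ [m1 [s1 [Mm1 s1Q ->]]] [m2 [s2 [Mm2 s2Q ->]]].
    exists (m1 + m2), (s1 + s2).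
    split; [exact: (qmD hM) | exact: (qmD sosQ) | ring].
  - move=> c _ [m [s [Mm sQ ->]]]; exists (c ^+ 2 * m), (c ^+ 2 * s).
    split; [exact: (qm_sqrM hM) | exact: (qm_sqrM sosQ) | ring].
  - exists 1, 0; split; [exact: (qm1 hM) | exact: (qm0 sosQ) | ring].
have [[m [s [Mm sQ ->]]]|M'1] := pselect (M' (-1)); first by exists m, s.
exfalso; apply/Ma/(maxM.2 M') => //.
- by move=> x Mx; exists x, 0; split; [|exact: (qm0 sosQ)|ring].
- by exists 0, 1; split; [exact: (qm0 hM) | exact: (qm1 sosQ) | ring].
Qed.

Lemma maximal_qm_total a : M a \/ M (- a).
Proof.
apply: contrapT => /not_orP [Ma Mna].
have [m1 [s1 [Mm1 s1Q e1]]] := maximal_qm_certificate Ma.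
have [m2 [s2 [Mm2 s2Q e2]]] := maximal_qm_certificate Mna.
have Mns1 : M (- s1).
  have -> : - s1 = s2 * m1 + s1 * m2 + s2.
    have -> : m1 = -1 - a * s1 by rewrite e1; ring.
    have -> : m2 = -1 + a * s2 by rewrite e2; ring.
    ring.
  by apply: (qmD hM); [apply: (qmD hM); apply: (qm_sosM hM) | apply: s2Q].
apply: M1; rewrite e1; apply: (qmD hM) => //.
by apply: (qm_mul_support hM) => //; apply: s1Q.
Qed.

Lemma maximal_qm_closed u : (forall e, 0 < e -> M (u + e%:A)) -> M u.
Proof.
move=> Mue; apply: contrapT => Mu.
have [m [s [Mm sQ e1]]] := maximal_qm_certificate Mu.
have [n [n1 Mn]] := archM (- s).
have n0 : (n%:R : R) != 0 by rewrite pnatr_eq0 -lt0n.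
pose e : R := (2 * n%:R)^-1.
have e0 : 0 < e by rewrite /e invr_gt0 mulr_gt0 // ltr0n.
have en : e * n%:R = 2^-1 by rewrite /e; field.
suff : M ((-1 + 2^-1)%:A) by move/(qm_alg_ge0 hM M1); lra.
have -> : (-1 + 2^-1)%:A = m + s * (u + e%:A) + e%:A * (n%:R + - s).
  by rewrite -en !algE e1; ring.
apply: (qmD hM); last by apply: (qm_algM hM) => //; exact: ltW.
by apply: (qmD hM) => //; apply: (qm_sosM hM) => //; apply: Mue.
Qed.

Definition maximal_qm_value a := sup [set r : R | M (a - r%:A)].

Lemma maximal_qm_lower_has_sup a : has_sup [set r : R | M (a - r%:A)].
Proof.
split.
  have [n [_ Mn]] := archM a; exists (- n%:R) => /=.
  by rewrite algN alg_nat opprK addrC.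
have [n [_ Mn]] := archM (- a); exists n%:R => r Mar.
suff : M ((n%:R - r)%:A) by move/(qm_alg_ge0 hM M1); lra.
have -> : (n%:R - r)%:A = (a - r%:A) + (n%:R + - a) by rewrite !algE; ring.
exact: (qmD hM).
Qed.

Lemma maximal_qm_value_support a :
  qm_support M (a - (maximal_qm_value a)%:A).
Proof.
set v := maximal_qm_value a; have hs := maximal_qm_lower_has_sup a.
split; rewrite ?opprB; apply: maximal_qm_closed => e e0.
  have [r Mar ltr] := sup_adherent e0 hs.
  have -> : a - v%:A + e%:A = (a - r%:A) + (r - v + e)%:A.
    by rewrite !algE; ring.
  by apply: (qmD hM) => //; apply: (qm_alg hM); rewrite /v /maximal_qm_value; lra.
case: (maximal_qm_total (v%:A - a + e%:A)) => // Mn; exfalso.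
have Mve : M (a - (v + e)%:A) by move: Mn; congr M; rewrite !algE; ring.
have := sup_upper_bound hs Mve; rewrite -/(maximal_qm_value a) -/v; lra.
Qed.

Lemma maximal_qm_valueE a r :
  qm_support M (a - r%:A) -> maximal_qm_value a = r.
Proof.
move=> Mar; apply/eqP; rewrite -subr_eq0; apply/eqP.
apply: (qm_support_alg hM M1).
have -> : (maximal_qm_value a - r)%:A =
    (a - r%:A) + - (a - (maximal_qm_value a)%:A) by rewrite !algE; ring.
apply: (qm_supportD hM) => //.
by split; rewrite ?opprK; apply maximal_qm_value_support.
Qed.

Lemma maximal_qm_char : exists y : A -> R, KQY M y.
Proof.
pose v := maximal_qm_value; have vS := maximal_qm_value_support.
exists v; split; last first.
  move=> g Mg; apply: (qm_alg_ge0 hM M1).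
  have -> : (v g)%:A = - (g - (v g)%:A) + g by ring.
  by apply: (qmD hM) => //; case: (vS g).
split.
- apply: maximal_qm_valueE; rewrite scale1r subrr.
  by split; rewrite ?oppr0; apply: (qm0 hM).
- move=> a b; apply: maximal_qm_valueE.
  have -> : a + b - (v a + v b)%:A = (a - (v a)%:A) + (b - (v b)%:A).
    by rewrite !algE; ring.
  exact: (qm_supportD hM).
- move=> a b; apply: maximal_qm_valueE.
  have -> : a * b - (v a * v b)%:A =
      b * (a - (v a)%:A) + (v a)%:A * (b - (v b)%:A) by rewrite !algE; ring.
  by apply: (qm_supportD hM); apply: (qm_support_mull hM).
- move=> r a; apply: maximal_qm_valueE.
  have -> : r *: a - (r * v a)%:A = r%:A * (a - (v a)%:A).
    by rewrite algM -[r *: a]mulr_algl mulrBr.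
  exact: (qm_support_mull hM).
Qed.

End MaximalProperQM.

Lemma archimedean_qm_char (R : realType) (A : comAlgType R) (N : set A) :
  proper_qm N -> archimedean_qm N -> exists y : A -> R, KQY N y.
Proof.
move=> properN archN; have [M NM maxM] := maximal_proper_qm_ext properN.
have [y [chy yM]] := maximal_qm_char maxM (archimedean_qm_sub NM archN).
by exists y; split => // g Ng; apply/yM/NM.
Qed.

Section Characters.
Variables (R : realType) (C : comAlgType R) (y : C -> R).
Hypothesis hy : is_char y.

Lemma charD a b : y (a + b) = y a + y b.
Proof. by case: hy. Qed.

Lemma charM a b : y (a * b) = y a * y b.
Proof. by case: hy. Qed.

Lemma charZ r a : y (r *: a) = r * y a.
Proof. by case: hy. Qed.

Lemma char_alg r : y r%:A = r.
Proof. by case: hy => y1 _ _ _; rewrite charZ y1 mulr1. Qed.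

Lemma char0 : y 0 = 0.
Proof. by rewrite -(scale0r (1 : C)) char_alg. Qed.

Lemma charN a : y (- a) = - y a.
Proof. by rewrite -scaleN1r charZ mulN1r. Qed.

End Characters.

Section Extension.
Variables (R : realType) (B A : comAlgType R) (iota : {lrmorphism B -> A}).
Variable Q' : set A.
Hypotheses (hQ' : quadratic_module Q') (archQ' : archimedean_qm Q').
Variable z : B -> R.
Hypothesis hz : is_char z.

Let iotaD_alg b r : iota (b + r%:A) = iota b + r%:A.
Proof. by rewrite raddfD; congr (_ + _); exact: rmorph_alg. Qed.

(* With n - a^2 in Q', u^2 n = d, k = 1 / (2 u) and c = k^2 c0^2:
   a c0 + d + c = (u a + k c0)^2 + u^2 (n - a^2). *)
Lemma ker_shift a c0 d : z c0 = 0 -> 0 < d ->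
  exists c, z c = 0 /\ Q' (a * iota c0 + d%:A + iota c).
Proof.
move=> zc0 d0.
have [n [n1 Qn]] := archQ' (- a ^+ 2).
have n0 : 0 < n%:R :> R by rewrite ltr0n.
pose u := Num.sqrt (d / n%:R); pose k := (2 * u)^-1.
have u0 : 0 < u by rewrite sqrtr_gt0 divr_gt0.
have uun : u * u * n%:R = d.
  by rewrite -expr2 sqr_sqrtr ?divfK ?gt_eqF // divr_ge0 ?ltW.
have uk : 2 * u * k = 1 by rewrite /k; field; rewrite gt_eqF.
exists ((k * k) *: c0 ^+ 2); split.
  by rewrite charZ // expr2 charM // zc0 !mulr0.
have -> : iota ((k * k) *: c0 ^+ 2) = (k * k)%:A * iota c0 ^+ 2.
  by rewrite linearZ /= rmorphXn mulr_algl.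
have -> : a * iota c0 + d%:A + (k * k)%:A * iota c0 ^+ 2 =
    (u%:A * a + k%:A * iota c0) ^+ 2 + (u * u)%:A * (n%:R + - a ^+ 2).
  have -> : a * iota c0 = (2 * u * k)%:A * (a * iota c0).
    by rewrite uk scale1r mul1r.
  by rewrite -uun !algE; ring.
apply: (qmD hQ'); first exact: (qm_sqr hQ').
by apply: (qm_algM hQ') => //; rewrite mulr_ge0 ?ltW.
Qed.

Definition ker_saturation := [set a : A |
  forall d, 0 < d -> exists c, z c = 0 /\ Q' (a + d%:A + iota c)].

Lemma sub_ker_saturation : Q' `<=` ker_saturation.
Proof.
move=> q Qq d d0; exists 0; split; first exact: char0.
rewrite raddf0 addr0; apply: (qmD hQ') => //.
by apply: (qm_alg hQ'); exact: ltW.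
Qed.

Lemma ker_saturationD a1 a2 :
  ker_saturation a1 -> ker_saturation a2 -> ker_saturation (a1 + a2).
Proof.
move=> Na1 Na2 d d0; have d2 : 0 < d / 2 by rewrite divr_gt0.
have [c1 [zc1 Q1]] := Na1 _ d2; have [c2 [zc2 Q2]] := Na2 _ d2.
exists (c1 + c2); split; first by rewrite charD // zc1 zc2 addr0.
have -> : a1 + a2 + d%:A + iota (c1 + c2) =
    (a1 + (d / 2)%:A + iota c1) + (a2 + (d / 2)%:A + iota c2).
  by rewrite raddfD {1}(splitr d) algD; ring.
exact: (qmD hQ').
Qed.

Lemma ker_saturation_sqrM c a :
  ker_saturation a -> ker_saturation (c ^+ 2 * a).
Proof.
move=> Na d d0.
have [n [n1 Qn]] := archQ' (- c ^+ 2).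
have n0 : (n%:R : R) != 0 by rewrite pnatr_eq0 -lt0n.
pose e : R := d / 2 / n%:R.
have e0 : 0 < e by rewrite /e !divr_gt0 // ltr0n.
have d2 : 0 < d / 2 by rewrite divr_gt0.
have [c1 [zc1 Q1]] := Na _ e0.
have [c2 [zc2 Q2]] := ker_shift (- c ^+ 2) zc1 d2.
exists c2; split => //.
have -> : c ^+ 2 * a + d%:A + iota c2 =
    c ^+ 2 * (a + e%:A + iota c1) + e%:A * (n%:R + - c ^+ 2)
    + (- c ^+ 2 * iota c1 + (d / 2)%:A + iota c2).
  have {1}-> : d = e * n%:R + d / 2 by rewrite /e; field.
  by rewrite !algE; ring.
apply: (qmD hQ') => //; apply: (qmD hQ'); first exact: (qm_sqrM hQ').
by apply: (qm_algM hQ'); rewrite ?ltW.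
Qed.

Lemma ker_saturation_qm : quadratic_module ker_saturation.
Proof.
split; [exact: ker_saturationD | exact: ker_saturation_sqrM |].
exact/sub_ker_saturation/(qm1 hQ').
Qed.

Lemma ker_saturation_proper :
  (forall b, Q' (iota b) -> 0 <= z b) -> proper_qm ker_saturation.
Proof.
move=> zQ; split; first exact: ker_saturation_qm.
move=> N1; have half_gt0 : (0 : R) < 2^-1 by rewrite invr_gt0.
have [c [zc Qc]] := N1 _ half_gt0.
suff : 0 <= z (c + (-1 + 2^-1)%:A).
  by rewrite charD // zc char_alg // add0r; lra.
apply: zQ; rewrite iotaD_alg.
by move: Qc; congr Q'; rewrite !algE; ring.
Qed.

Lemma ker_saturation_char y : KQY ker_saturation y -> y \o iota = z.
Proof.
move=> [hy yN]; apply/funext => b /=.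
pose c0 := b + (- z b)%:A.
have zc0 : z c0 = 0 by rewrite charD // char_alg // subrr.
have Nc0 e : ker_saturation (e * iota c0) by move=> d d0; exact: ker_shift.
have := yN _ (Nc0 1); have := yN _ (Nc0 (-1)).
rewrite mul1r mulN1r charN // iotaD_alg charD // char_alg //; lra.
Qed.

End Extension.

Lemma restriction_surjective (R : realType) (B A : comAlgType R)
    (iota : {lrmorphism B -> A}) (Q' : set A) :
  quadratic_module Q' -> archimedean_qm Q' ->
  forall z : B -> R, KQY (iota @^-1` Q') z ->
  exists2 y : A -> R, KQY Q' y & z = y \o iota.
Proof.
move=> hQ' archQ' z [hz zQ].
have properN := ker_saturation_proper hQ' archQ' hz zQ.
have archN := archimedean_qm_sub (sub_ker_saturation iota hQ' hz) archQ'.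
have [y [hy yN]] := archimedean_qm_char properN archN.
exists y; last by rewrite (ker_saturation_char hQ' archQ' hz).
by split => // g Qg; apply/yN/sub_ker_saturation.
Qed.

Section Restriction.
Variables (R : realType) (B A : comAlgType R) (iota : {lrmorphism B -> A}).

Lemma is_char_comp y : is_char y -> is_char (y \o iota).
Proof.
move=> hy; split => /= [|a b|a b|r a].
- by rewrite rmorph1; case: hy.
- by rewrite raddfD charD.
- by rewrite rmorphM charM.
- by rewrite linearZ charZ.
Qed.

Lemma KQY_comp (Q' : set A) y : KQY Q' y -> KQY (iota @^-1` Q') (y \o iota).
Proof.
by move=> [hy yQ]; split; [exact: is_char_comp | move=> b; apply: yQ].
Qed.

Lemma Yclosure_comp (S : set (A -> R)) y :
  Yclosure S y -> Yclosure [set w \o iota | w in S] (y \o iota).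
Proof.
move=> [hy clS]; split; first exact: is_char_comp.
move=> cs eps eps0; have [w Sw wy] := clS (map iota cs) eps eps0.
by exists (w \o iota); [exists w | move=> c cs_c; apply/wy/map_f].
Qed.

End Restriction.

Lemma Yclosure_sub_KQY (R : realType) (C : comAlgType R) (S : set (C -> R))
    (Q : set C) :
  S `<=` KQY Q -> Yclosure S `<=` KQY Q.
Proof.
move=> SQ y [hy clS]; split=> // g Qg; rewrite leNgt; apply/negP => yg0.
have nyg_gt0 : 0 < - y g by rewrite oppr_gt0.
have [w /SQ [_ wQ]] := clS [:: g] _ nyg_gt0.
move/(_ g (mem_head _ _)); have := wQ g Qg; rewrite ltr_norml; lra.
Qed.

Theorem proposition3p7 (R : realType) (B A : comAlgType R)
    (iota : {lrmorphism B -> A}) (iota_inj : injective iota)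
    (Q' : set A) (hQ' : quadratic_module Q') (archQ' : archimedean_qm Q') :
  let Q : set B := iota @^-1` Q' in
  (forall z : B -> R, KQY Q z -> exists2 y : A -> R, KQY Q' y & z = y \o iota)
  /\
  (forall (X : Type) (ev : X -> A -> R),
     (forall x, is_char (ev x)) ->
     (forall a b : A, (forall x, ev x a = ev x b) -> a = b) ->
     (forall x g, Q' g -> 0 <= ev x g) ->
     let mA := [set ev x | x in [set: X]] in
     let mB := [set ev x \o iota | x in [set: X]] in
     (mA = KQY Q' -> mB = KQY Q) /\
     (Yclosure mA = KQY Q' -> Yclosure mB = KQY Q)).
Proof.
move=> Q; have surj := restriction_surjective hQ' archQ'.
split=> [|X ev evc _ evpos mA mB]; first exact: surj.
have mBE : mB = [set w \o iota | w in mA] by rewrite image_comp.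
have mAK : mA `<=` KQY Q'.
  by move=> _ [x _ <-]; split; [exact: evc | exact: evpos].
have mBK : mB `<=` KQY Q by rewrite mBE => _ [w /mAK Kw <-]; exact: KQY_comp.
split=> eqA; apply/seteqP; split.
- exact: mBK.
- by move=> z /surj [y]; rewrite -eqA => -[x _ <-] ->; exists x.
- exact: Yclosure_sub_KQY.
- by move=> z /surj [y]; rewrite -eqA mBE => cly ->; exact: Yclosure_comp.
Qed.
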